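(* Suppose that the topology $\sigma(L_{\mathcal F},L_{\mathcal F}^{*})$ has the C-property and that $L_{\mathcal F}$ is order complete. Let $\pi:L_{\mathcal F}\to L_{\mathcal G}$ satisfy (MON) and (QCO). Then $\pi$ is $\sigma(L_{\mathcal F},L_{\mathcal F}^{*})$-lower semicontinuous (i.e. $\{X\in L_{\mathcal F}:\pi(X)\le Y\}$ is $\sigma(L_{\mathcal F},L^*_{\mathcal F})$-closed for every $Y\in L_{\mathcal G}$) if and only if $\pi$ is continuous from below, i.e. $X_n\uparrow X$ $\mathbb P$-a.s. implies $\pi(X_n)\uparrow\pi(X)$ $\mathbb P$-a.s.
   Context: Let $(\Omega,\mathcal F,\mathbb P)$ be a probability space, $\mathcal G\subseteq\mathcal F$ a sub-$\sigma$-algebra; (in)equalities between random variables hold $\mathbb P$-a.s. Standing assumptions: $L_{\mathcal F}\subseteq L^0(\Omega,\mathcal F,\mathbb P)$ and $L_{\mathcal G}\subseteq L^0(\Omega,\mathcal G,\mathbb P)$ are vector lattices closed under multiplication by indicators of $\mathcal F$- (resp. $\mathcal G$-) measurable sets; the order continuous dual $L^*_{\mathcal F}$ of $(L_{\mathcal F},\ge)$ is a lattice contained in $L^1(\Omega,\mathcal F,\mathbb P)$ (functionals $X\mapsto E_{\mathbb P}[ZX]$), closed under multiplication by indicators of $\mathcal F$-measurable sets; $(L_{\mathcal F},\sigma(L_{\mathcal F},L^*_{\mathcal F}))$ is a locally convex Riesz space. (MON): $X\le Y\Rightarrow\pi(X)\le\pi(Y)$; (QCO): $\pi(\Lambda X+(1-\Lambda)Y)\le\pi(X)\vee\pi(Y)$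 for $X,Y\in L_{\mathcal F}$ and $\mathcal G$-measurable $\Lambda$ with $0\le\Lambda\le 1$. A sequence $X_n$ order converges to $X$ ($X_n\overset{o}{\to}X$) if there are $Y_n\in L_{\mathcal F}$ with $Y_n\downarrow0$ and $|X-X_n|\le Y_n$. A linear topology $\tau$ on a Riesz space has the C-property if whenever a net $X_\alpha\overset{\tau}{\to}X$ there exist a sequence $X_{\alpha_n}$ of elements of the net and convex combinations $Z_n\in\mathrm{conv}(X_{\alpha_n},X_{\alpha_{n+1}},\dots)$ with $Z_n\overset{o}{\to}X$. *)

From HB Require Import structures.
From mathcomp Require Import all_boot all_order all_algebra.
From mathcomp Require Import all_classical all_reals all_analysis.
Set Implicit Arguments. Unset Strict Implicit. Unset Printing Implicit Defensive.
Import Order.TTheory GRing.Theory Num.Theory.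
Import numFieldNormedType.Exports.
Local Open Scope classical_set_scope.
Local Open Scope ring_scope.

(* Random variables are represented by functions Omega -> R; all
   (in)equalities between them are understood P-almost surely. *)

Section Defs.
Context (d : measure_display) (Omega : measurableType d) (R : realType)
        (P : probability Omega R).

Definition rv := Omega -> R.

Definition ale (X Y : rv) : Prop := {ae P, forall w, X w <= Y w}.

Definition pair_E (Z X : rv) : R := Rintegral P setT (fun w => Z w * X w).

Definition Gmeas (G : set (set Omega)) (X : rv) : Prop :=
  forall B : set R, measurable B -> G (X @^-1` B).

Definition vlattice_ind (M : set (set Omega)) (L : set rv) : Prop :=
  [/\ L (fun _ => 0),
      (forall X Y, L X -> L Y -> L (fun w => X w + Y w)),
      (forall (a : R) X, L X -> L (fun w => a * X w)),
      (forall X Y, L X -> L Y -> L (fun w => Num.max (X w) (Y w))) &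
      (forall A X, M A -> L X -> L (fun w => \1_A w * X w))].

Definition decr_to0 (Y : nat -> rv) : Prop :=
  {ae P, forall w, (forall n, Y n.+1 w <= Y n w) /\ (fun n => Y n w) @ \oo --> (0:R)}.

Definition incr_to (Xn : nat -> rv) (X : rv) : Prop :=
  {ae P, forall w, (forall n, Xn n w <= Xn n.+1 w) /\ (fun n => Xn n w) @ \oo --> X w}.

Definition oconv (L : set rv) (Xn : nat -> rv) (X : rv) : Prop :=
  exists Y : nat -> rv, (forall n, L (Y n)) /\ decr_to0 Y /\
    forall n, ale (fun w => `|X w - Xn n w|) (Y n).

Definition ocomplete (L : set rv) : Prop :=
  forall A : set rv, A `<=` L -> A !=set0 ->
    (exists U, L U /\ forall X, A X -> ale X U) ->
    exists S, [/\ L S, (forall X, A X -> ale X S) &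
                   (forall U, L U -> (forall X, A X -> ale X U) -> ale S U)].

Definition oc_functional (L : set rv) (phi : rv -> R) : Prop :=
  [/\ (forall (a b : R) X Y, L X -> L Y ->
          phi (fun w => a * X w + b * Y w) = a * phi X + b * phi Y),
      (forall X Y, L X -> L Y -> exists c : R, forall W, L W ->
          ale X W -> ale W Y -> `|phi W| <= c) &
      (forall (Xn : nat -> rv) X, (forall n, L (Xn n)) -> L X ->
          oconv L Xn X -> (fun n => phi (Xn n)) @ \oo --> phi X)].

Definition wconv_net (Lstar : set rv) (I : Type) (le : I -> I -> Prop)
    (x : I -> rv) (X : rv) : Prop :=
  forall Z, Lstar Z -> forall e : R, 0 < e ->
    exists a0, forall a, le a0 a -> `|pair_E Z (x a) - pair_E Z X| < e.

Definition directed (I : Type) (le : I -> I -> Prop) : Prop :=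
  [/\ inhabited I, (forall a, le a a), (forall a b c, le a b -> le b c -> le a c) &
      (forall a b, exists c, le a c /\ le b c)].

Definition in_conv_tail (f : nat -> rv) (n : nat) (W : rv) : Prop :=
  exists (m : nat) (c : nat -> R), [/\ (forall k, 0 <= c k),
    \sum_(n <= k < m) c k = 1 &
    W = (fun w => \sum_(n <= k < m) c k * f k w)].

Definition C_property (L Lstar : set rv) : Prop :=
  forall (I : Type) (le : I -> I -> Prop) (x : I -> rv) (X : rv),
    directed le -> (forall a, L (x a)) -> L X -> wconv_net Lstar le x X ->
    exists (al : nat -> I) (Zn : nat -> rv),
      (forall n, L (Zn n)) /\ (forall n, in_conv_tail (fun k => x (al k)) n (Zn n)) /\
      oconv L Zn X.

(* A subset A of L is closed in sigma(L, Lstar): its complement in L is open,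
   basic neighbourhoods given by finitely many Z_i in Lstar and e > 0 *)
Definition wclosed (L Lstar : set rv) (A : set rv) : Prop :=
  forall X, L X -> ~ A X ->
    exists (n : nat) (Zs : 'I_n -> rv) (e : R),
      [/\ 0 < e, (forall i, Lstar (Zs i)) &
          forall X', L X' -> (forall i, `|pair_E (Zs i) X' - pair_E (Zs i) X| < e) ->
            ~ A X'].

Definition w_lsc (L Lstar LG : set rv) (pi : rv -> rv) : Prop :=
  forall Y, LG Y -> wclosed L Lstar [set X | L X /\ ale (pi X) Y].

Definition cont_below (L : set rv) (pi : rv -> rv) : Prop :=
  forall (Xn : nat -> rv) X, (forall n, L (Xn n)) -> L X ->
    incr_to Xn X -> incr_to (fun n => pi (Xn n)) (pi X).

End Defs.

From HB Require Import structures.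
From mathcomp Require Import all_boot all_order all_algebra.
From mathcomp Require Import all_classical all_reals all_analysis.
From mathcomp.algebra_tactics Require Import lra.
Import Order.TTheory GRing.Theory Num.Theory.
Import numFieldNormedType.Exports.
Local Open Scope classical_set_scope.
Local Open Scope ring_scope.
Set Implicit Arguments. Unset Strict Implicit.

(* Lower semicontinuity gives continuity from below: if [Xn] increases to [X],
   then [Xn] converges to [X] in sigma(L_F, L_F^* ) because the dual consists of
   order continuous functionals, so any Y in L_G dominating every [pi (Xn n)]
   dominates [pi X]. Taking for Y the value [pi X] lowered by [(pi X - pi X_0) / (k + 1)]
   on the G-measurable event where all [pi (Xn n)] stay that far below [pi X]
   shows that this event is negligible, whence [pi (Xn n)] increases to [pi X].

   Conversely, a point X of the weak closure of [{pi <= Y}] is the limit of a net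
   in that set; the C-property turns the net into convex combinations [Zn]
   order converging to X, with [pi Zn <= Y] by (QCO). By order completeness the
   tail infima [V n = inf_(k >= n) Zn k] increase to X, and continuity from
   below together with (MON) gives [pi X = lim pi (V n) <= Y]. *)

Section RealSequences.
Context (R : realType).
Implicit Types (u : nat -> R) (l y : R).

Lemma nondecreasing_cvg_le u l : (forall n, u n <= u n.+1) -> u @ \oo --> l ->
  forall n, u n <= l.
Proof.
move=> /nondecreasing_seqP nd cu n.
by have := nondecreasing_cvgn_le nd (cvgP _ cu) n; rewrite (cvg_lim _ cu).
Qed.

Lemma cvg_le_bound u l y : (forall n, u n <= y) -> u @ \oo --> l -> l <= y.
Proof. by move=> ub cu; apply: (ler_cvg_to cu (cvg_cst y)); apply: nearW. Qed.

Lemma nondecreasing_cvg_of_gaps u l :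
  (forall n, u n <= u n.+1) -> (forall n, u n <= l) ->
  (forall k, (forall n, (k.+1%:R)^-1 * (l - u 0%N) < l - u n) -> l <= u 0%N) ->
  u @ \oo --> l.
Proof.
move=> /[dup] iu /nondecreasing_seqP nd ul gap; apply/cvgrPdist_lt => e e0.
suff [n0 close] : exists n0, l - u n0 < e.
  near=> m; rewrite ger0_norm ?subr_ge0 //.
  apply: le_lt_trans close; rewrite lerD2l lerN2.
  by apply: nd; near: m; exact: nbhs_infty_ge.
apply: contrapT => /forallNP far.
have {}far n : e <= l - u n by rewrite leNgt; apply/negP/far.
have D0 : 0 <= (l - u 0%N) / e by apply: divr_ge0; have := far 0%N; lra.
have small : ((Num.bound ((l - u 0%N) / e)).+1%:R)^-1 * (l - u 0%N) < e.
  rewrite ltr_pdivrMl ?ltr0n // -ltr_pdivrMr //.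
  by apply: lt_le_trans (archi_boundP D0) _; rewrite ler_nat.
have := gap _ (fun n => lt_le_trans small (far n)); have := far 0%N; lra.
Unshelve. all: by end_near.
Qed.

End RealSequences.

Lemma sigma_algebra_bigcap T (G : set (set T)) : sigma_algebra setT G ->
  forall A : nat -> set T, (forall n, G (A n)) -> G (\bigcap_n A n).
Proof.
move=> [_ GC GU] A GA.
have -> : \bigcap_n A n = setT `\` \bigcup_n (setT `\` A n).
  by rewrite setTD setC_bigcup; apply: eq_bigcapr => n _; rewrite setTD setCK.
by apply: (GC); apply: GU => n; apply: GC.
Qed.

Section AlmostSureOrder.
Context d (Omega : measurableType d) (R : realType) (P : probability Omega R).
Local Notation rv := (Omega -> R).
Implicit Types (X Y Z : rv) (Xn : nat -> rv).

Lemma ale_trans X Y Z : ale P X Y -> ale P Y Z -> ale P X Z.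
Proof. by apply: filterS2 => w; apply: le_trans. Qed.

Lemma incr_to_ale Xn X : incr_to P Xn X -> forall n, ale P (Xn n) X.
Proof.
by move=> H n; apply: filterS H => w [iX cX]; exact: nondecreasing_cvg_le cX n.
Qed.

Lemma incr_to_le_bound Xn X Y : incr_to P Xn X -> (forall n, ale P (Xn n) Y) ->
  ale P X Y.
Proof.
move=> H XnY; apply: filterS (filterI H (ae_foralln XnY)) => w [[_ cX] bnd].
exact: cvg_le_bound cX.
Qed.

Lemma Gmeas_cst (G : set (set Omega)) (a : R) : sigma_algebra setT G ->
  Gmeas G (fun _ => a).
Proof.
move=> [G0 GC _] B _; rewrite (preimage_cst a B); case: ifP => // _.
by have := GC set0 G0; rewrite setD0.
Qed.

Lemma vlattice_ind_sum (M : set (set Omega)) (L : set rv) : vlattice_ind M L ->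
  forall (f : nat -> rv) (c : nat -> R) n m, (forall k, L (f k)) ->
  L (fun w => \sum_(n <= k < m) c k * f k w).
Proof.
move=> [L0 LD LZ _ _] f c n m Lf; elim: m => [|m IH].
  by under eq_fun do rewrite big_geq //.
have [nm|mn] := leqP n m; last by under eq_fun do rewrite big_geq //.
by under eq_fun do rewrite big_nat_recr //=; apply: LD => //; apply: LZ.
Qed.

Definition ale_monotone (L : set rv) (pi : rv -> rv) :=
  forall X Y, L X -> L Y -> ale P X Y -> ale P (pi X) (pi Y).

Definition G_quasiconvex (G : set (set Omega)) (L : set rv) (pi : rv -> rv) :=
  forall X Y (Lam : Omega -> R), L X -> L Y -> Gmeas G Lam ->
    ale P (fun _ => 0) Lam -> ale P Lam (fun _ => 1) ->
    L (fun w => Lam w * X w + (1 - Lam w) * Y w) ->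
    ale P (pi (fun w => Lam w * X w + (1 - Lam w) * Y w))
          (fun w => Num.max (pi X w) (pi Y w)).

End AlmostSureOrder.

Section LowerSemicontinuityToContinuity.
Context d (Omega : measurableType d) (R : realType) (P : probability Omega R).
Local Notation rv := (Omega -> R).
Variables (LF Lstar : set rv).
Hypothesis vLF : vlattice_ind measurable LF.
Hypothesis dualZ : forall Z, Lstar Z -> oc_functional P LF (pair_E P Z).

Lemma incr_to_wconv (Xn : nat -> rv) X : (forall n, LF (Xn n)) -> LF X ->
  incr_to P Xn X ->
  forall Z, Lstar Z -> (fun n => pair_E P Z (Xn n)) @ \oo --> pair_E P Z X.
Proof.
move=> LXn LX H Z LsZ; have [L0 LD LZ _ _] := vLF.
have [_ _ oc] := dualZ LsZ; apply: oc => //.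
exists (fun n w => X w + -1 * Xn n w); split.
  by move=> n; apply: LD => //; apply: LZ.
split; last first.
  move=> n; apply: filterS (incr_to_ale H n) => w /= XnX.
  by rewrite mulN1r ger0_norm // subr_ge0.
apply: filterS H => w [iX cX]; split.
  by move=> n; rewrite !mulN1r lerD2l lerN2.
rewrite -(subrr (X w)); under eq_fun do rewrite mulN1r.
by apply: cvgB => //; apply: cvg_cst.
Qed.

Lemma wclosed_seq_closed (A : set rv) (Xn : nat -> rv) X :
  wclosed P LF Lstar A -> (forall n, LF (Xn n) /\ A (Xn n)) -> LF X ->
  (forall Z, Lstar Z -> (fun n => pair_E P Z (Xn n)) @ \oo --> pair_E P Z X) ->
  A X.
Proof.
move=> cl LAXn LX wk; apply: contrapT => nAX.
have [N [Zs [e [e0 LZs far]]]] := cl X LX nAX.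
have : \forall m \near \oo, forall i, `|pair_E P (Zs i) (Xn m) - pair_E P (Zs i) X| < e.
  apply: filter_forall => i; have /cvgrPdist_lt/(_ e e0) := wk _ (LZs i).
  by apply: filterS => m; rewrite distrC.
case=> m _ /(_ m (leqnn m)) close.
by have [LXm AXm] := LAXn m; apply: far AXm.
Qed.

Variables (G : set (set Omega)) (LG : set rv) (pi : rv -> rv).
Hypotheses (sG : sigma_algebra setT G) (GmLG : forall X, LG X -> Gmeas G X).
Hypotheses (vLG : vlattice_ind G LG) (piLG : forall X, LF X -> LG (pi X)).
Hypothesis mon : ale_monotone P LF pi.

Lemma w_lsc_cont_below : w_lsc P LF Lstar LG pi -> cont_below P LF pi.
Proof.
move=> lsc Xn X LXn LX H; have [_ GD GZ _ GI] := vLG.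
have piXnX n : ale P (pi (Xn n)) (pi X) by apply: mon => //; exact: incr_to_ale.
have pi_bound V : LG V -> (forall n, ale P (pi (Xn n)) V) -> ale P (pi X) V.
  move=> LGV piXnV; suff [] : [set X | LF X /\ ale P (pi X) V] X by [].
  by apply: (wclosed_seq_closed (lsc V LGV)) (incr_to_wconv LXn LX H).
(* [C k] is the G-measurable event on which every [pi (Xn n)] stays [D / (k + 1)]
   below [pi X]. Lowering [pi X] by that amount on [C k] still bounds every
   [pi (Xn n)], so lower semicontinuity forces [D <= 0] on [C k]. *)
pose D w := pi X w + -1 * pi (Xn 0%N) w.
have LGD : LG D by apply: (GD); [|apply: (GZ)]; apply: (piLG).
pose gap k n w := (pi X w + -1 * pi (Xn n) w) + (- (k.+1%:R)^-1) * D w.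
pose C k := \bigcap_n (gap k n @^-1` `]0, +oo[).
have GC k : G (C k).
  apply: sigma_algebra_bigcap => // n.
  have LGgap : LG (gap k n).
    by apply: (GD); [apply: (GD); [|apply: (GZ)]; apply: (piLG)|apply: (GZ)].
  exact: GmLG LGgap _ (measurable_itv _).
have Dle0 k : ale P (pi X) (fun w => pi X w + (- (k.+1%:R)^-1) * (\1_(C k) w * D w)).
  apply: pi_bound; first by apply: (GD); [apply: (piLG)|apply: (GZ); apply: (GI)].
  move=> n; apply: filterS (piXnX n) => w /= piXnXw; rewrite indicE.
  have [/set_mem/(_ n I)|_] := boolP (w \in C k); last by rewrite mul0r mulr0 addr0.
  rewrite /= in_itv /= andbT /gap mul1r; set t := _ * D w; lra.
have inc : \forall w \ae P, forall n, pi (Xn n) w <= pi (Xn n.+1) w.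
  by apply: ae_foralln => n; apply: mon => //; apply: filterS H => w [].
apply: filterS (filterI inc (filterI (ae_foralln piXnX) (ae_foralln Dle0))).
move=> w [incw [piXnXw Dle0w]]; split => //.
apply: nondecreasing_cvg_of_gaps => // k gapk.
have wC : w \in C k.
  apply: mem_set => n _; rewrite /= in_itv /= andbT /gap /D !mulN1r mulNr.
  by rewrite subr_gt0; apply: gapk.
have : (k.+1%:R)^-1 * D w <= 0.
  by move: (Dle0w k); rewrite indicE wC mul1r mulNr; set t := _ * D w; lra.
by rewrite pmulr_rle0 ?invr_gt0 ?ltr0n // /D mulN1r subr_le0.
Qed.

End LowerSemicontinuityToContinuity.

Section WeakNeighbourhoods.
Context d (Omega : measurableType d) (R : realType) (P : probability Omega R).
Local Notation rv := (Omega -> R).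
Variable Lstar : set rv.

Record wnbhd := WNbhd {
  wnbhd_size : nat;
  wnbhd_fun : nat -> rv;
  wnbhd_rad : R;
  wnbhd_funP : forall i, (i < wnbhd_size)%N -> Lstar (wnbhd_fun i);
  wnbhd_radP : 0 < wnbhd_rad }.

Definition wnbhd_le (a b : wnbhd) :=
  (forall i, (i < wnbhd_size a)%N ->
     exists2 j, (j < wnbhd_size b)%N & wnbhd_fun b j = wnbhd_fun a i) /\
  wnbhd_rad b <= wnbhd_rad a.

Definition in_wnbhd (a : wnbhd) (X V : rv) :=
  forall i, (i < wnbhd_size a)%N ->
    `|pair_E P (wnbhd_fun a i) V - pair_E P (wnbhd_fun a i) X| < wnbhd_rad a.

Lemma wnbhd_directed : directed wnbhd_le.
Proof.
split.
- have F0 : forall i, (i < 0)%N -> Lstar ((fun _ _ => 0) i) by [].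
  by constructor; exact: WNbhd F0 ltr01.
- by move=> a; split => // i ia; exists i.
- move=> a b c [ab1 ab2] [bc1 bc2]; split; last exact: le_trans bc2 ab2.
  by move=> i /ab1[j /bc1[k kc cb] ba]; exists k; rewrite // cb.
move=> a b; pose na := wnbhd_size a.
pose F i := if (i < na)%N then wnbhd_fun a i else wnbhd_fun b (i - na).
have FP i : (i < na + wnbhd_size b)%N -> Lstar (F i).
  rewrite /F; case: ifP => ia iab; first exact: wnbhd_funP.
  by apply: wnbhd_funP; rewrite ltn_subLR // leqNgt ia.
have rP : 0 < Num.min (wnbhd_rad a) (wnbhd_rad b).
  by rewrite lt_min !wnbhd_radP.
exists (WNbhd FP rP); split; split => /=; rewrite ?ge_min ?lexx ?orbT //.
- by move=> i ia; exists i; rewrite ?ltn_addr // /F ia.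
- move=> i ib; exists (na + i)%N; first by rewrite ltn_add2l.
  by rewrite /F ltnNge leq_addr /= addKn.
Qed.

Lemma wconv_net_wnbhd (x : wnbhd -> rv) X : (forall a, in_wnbhd a X (x a)) ->
  wconv_net P Lstar wnbhd_le x X.
Proof.
move=> xX Z LZ e e0.
have Z1 : forall i, (i < 1)%N -> Lstar ((fun _ => Z) i) by [].
exists (WNbhd Z1 e0) => a [/(_ 0%N isT)[j ja /= <-] ea].
exact: lt_le_trans (xX a j ja) ea.
Qed.

End WeakNeighbourhoods.

Section ContinuityToLowerSemicontinuity.
Context d (Omega : measurableType d) (R : realType) (P : probability Omega R).
Local Notation rv := (Omega -> R).
Variable LF : set rv.
Hypotheses (vLF : vlattice_ind measurable LF) (ocp : ocomplete P LF).

Lemma ocomplete_inf (A : set rv) : A `<=` LF -> A !=set0 ->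
  (exists U, LF U /\ forall X, A X -> ale P U X) ->
  exists I, [/\ LF I, (forall X, A X -> ale P I X) &
                 (forall U, LF U -> (forall X, A X -> ale P U X) -> ale P U I)].
Proof.
have [_ _ LZ _ _] := vLF; pose neg (X : rv) w := -1 * X w.
have negK X : neg (neg X) = X by apply/funext => w; rewrite /neg mulrA mulrNN !mul1r.
have ale_neg X Y : ale P (neg X) (neg Y) <-> ale P Y X.
  by split; apply: filterS => w; rewrite /neg !mulN1r lerN2.
move=> AL [X0 AX0] [U [LU UA]].
have [|||S [LS ubS lubS]] := ocp (A := neg @` A).
- by move=> _ [X AX <-]; apply: LZ; exact: AL.
- by exists (neg X0), X0.
- by exists (neg U); split; [exact: LZ | move=> _ [X AX <-]; apply/ale_neg/UA].
exists (neg S); split; first exact: LZ.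
  by move=> X AX; apply/ale_neg; rewrite negK; apply: ubS; exists X.
move=> V LV VA; rewrite -(negK V); apply/ale_neg/lubS; first exact: LZ.
by move=> _ [X AX <-]; apply/ale_neg/VA.
Qed.

Lemma oconv_incr_minorant (Zn : nat -> rv) X : (forall n, LF (Zn n)) -> LF X ->
  oconv P LF Zn X ->
  exists V : nat -> rv, [/\ forall n, LF (V n), forall n, ale P (V n) (Zn n) &
                           incr_to P V X].
Proof.
move=> LZn LX [W [LW [decW XZnW]]]; have [_ LD LZ _ _] := vLF.
(* [V n] is the infimum of the tail [Zn k], [k >= n]. *)
pose tail n := [set Zn k | k in [set k | (n <= k)%N]].
have tail_lb n : forall U, tail n U -> ale P (fun w => X w + -1 * W n w) U.
  move=> _ [k nk <-]; apply: filterS2 decW (XZnW k) => w [dW _].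
  have := (nonincreasing_seqP _).1 dW n k nk.
  have := ler_norm (X w - Zn k w); rewrite mulN1r; lra.
have LXW n : LF (fun w => X w + -1 * W n w) by apply: LD => //; exact: LZ.
have tailL n : tail n `<=` LF by move=> _ [k _ <-].
have tail_head n : tail n (Zn n) by apply: imageP => /=.
have tail0 n : tail n !=set0 by exists (Zn n).
have tailB n : exists U, LF U /\ forall Y, tail n Y -> ale P U Y.
  by exists (fun w => X w + -1 * W n w); split; [exact: LXW | exact: tail_lb].
have [V HV] := choice (fun n => ocomplete_inf (tailL n) (tail0 n) (tailB n)).
have VZn n : ale P (V n) (Zn n) by have [_ lbV _] := HV n; exact: lbV.
exists V; split => //; first by move=> n; case: (HV n).
have incV n : ale P (V n) (V n.+1).
  have [_ lbVn _] := HV n; have [LVn1 _ glbV] := HV n.+1.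
  by apply: glbV => [|_ [k nk <-]]; [case: (HV n) | apply/lbVn/imageP; exact: ltnW].
have XWV n : ale P (fun w => X w + -1 * W n w) (V n).
  by have [_ _ glbV] := HV n; apply: glbV; [exact: LXW | exact: tail_lb].
apply: filterS (filterI decW (filterI (ae_foralln incV)
  (filterI (ae_foralln XWV) (filterI (ae_foralln VZn) (ae_foralln XZnW))))).
move=> w [[_ W0] [iV [XWVw [VZnw XZnWw]]]]; split => //.
apply: (@squeeze_cvgr _ _ _ _ (fun n => X w - W n w) (fun n => X w + W n w)).
- apply: nearW => n; apply/andP; split; first by have := XWVw n; rewrite mulN1r.
  have := VZnw n; have := XZnWw n; have := ler_norm (Zn n w - X w).
  rewrite distrC /=; lra.
- by rewrite -[X in _ --> X](subr0 (X w)); apply: cvgB => //; exact: cvg_cst.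
- by rewrite -[X in _ --> X](addr0 (X w)); apply: cvgD => //; exact: cvg_cst.
Qed.

Variables (G : set (set Omega)) (pi : rv -> rv).
Hypotheses (sG : sigma_algebra setT G) (qco : G_quasiconvex P G LF pi).

Lemma quasiconvex_sum (Y : rv) (f : nat -> rv) :
  (forall k, LF (f k) /\ ale P (pi (f k)) Y) ->
  forall m n (c : nat -> R), (forall k, 0 <= c k) -> \sum_(n <= k < m) c k = 1 ->
  ale P (pi (fun w => \sum_(n <= k < m) c k * f k w)) Y.
Proof.
move=> Af; elim=> [|m IH] n c c0 s1.
  by move: s1; rewrite big_geq // => /eqP; rewrite eq_sym oner_eq0.
have [nm|mn] := leqP n m; last first.
  by move: s1; rewrite big_geq // => /eqP; rewrite eq_sym oner_eq0.
set s := \sum_(n <= k < m) c k.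
have s1' : s + c m = 1 by rewrite -s1 big_nat_recr.
have [s0|snz] := eqVneq s 0.
  have -> : (fun w => \sum_(n <= k < m.+1) c k * f k w) = f m.
    apply/funext => w; rewrite big_nat_recr //= big_seq big1 ?add0r.
      by have := s1'; rewrite s0 add0r => ->; rewrite mul1r.
    by move=> k; move/eqP: s0; rewrite psumr_eq0 // => /allP c0k /c0k/eqP->; rewrite mul0r.
  exact: (Af m).2.
(* Otherwise the sum is [s * g + (1 - s) * f m] for the renormalised shorter sum
   [g]; a constant weight is G-measurable, so (QCO) applies. *)
have sp : 0 < s by rewrite lt_neqAle eq_sym snz sumr_ge0.
pose g w := \sum_(n <= k < m) (c k / s) * f k w.
have Ag : ale P (pi g) Y.
  by apply: IH => [k|]; [rewrite divr_ge0 // ltW | rewrite -mulr_suml -/s divff].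
have LFg : LF g by apply: (vlattice_ind_sum vLF) => k; case: (Af k).
have E : (fun w => \sum_(n <= k < m.+1) c k * f k w) =
         (fun w => (fun _ => s) w * g w + (1 - (fun _ => s) w) * f m w).
  apply/funext => w /=; rewrite big_nat_recr //= /g mulr_sumr.
  congr (_ + _); last by rewrite -s1' addrC addKr.
  by apply: eq_bigr => k _; rewrite mulrA mulrCA divff // mulr1.
rewrite E; apply: ale_trans (qco LFg (Af m).1 (Gmeas_cst s sG) _ _ _) _.
- by apply: aeW => w; exact: ltW.
- by apply: aeW => w /=; rewrite -s1' lerDl.
- by rewrite -E; apply: (vlattice_ind_sum vLF) => k; case: (Af k).
- by apply: filterS2 Ag (Af m).2 => w h1 h2; rewrite ge_max h1 h2.
Qed.

Lemma cont_below_w_lsc (LG Lstar : set rv) : C_property P LF Lstar ->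
  ale_monotone P LF pi -> cont_below P LF pi -> w_lsc P LF Lstar LG pi.
Proof.
move=> Cp mon cb Y _ X LX nAX; apply: contrapT => notcl.
have adh (a : wnbhd Lstar) :
    exists V, (LF V /\ ale P (pi V) Y) /\ in_wnbhd P a X V.
  apply: contrapT => /forallNP none; apply: notcl.
  exists (wnbhd_size a), (fun i : 'I__ => wnbhd_fun a i), (wnbhd_rad a).
  split; [exact: wnbhd_radP | by move=> i; apply: wnbhd_funP |].
  by move=> V LV close AV; apply: (none V); split => // i ia; exact: (close (Ordinal ia)).
have [x Hx] := choice adh.
have [al [Zn [LZn [convZn oZn]]]] := Cp _ _ x X (wnbhd_directed _)
  (fun a => (Hx a).1.1) LX (wconv_net_wnbhd (fun a => (Hx a).2)).
have piZnY n : ale P (pi (Zn n)) Y.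
  have [m [c [c0 s1 ->]]] := convZn n.
  by apply: quasiconvex_sum => // k; exact: (Hx (al k)).1.
have [V [LV VZn incV]] := oconv_incr_minorant LZn LX oZn.
apply: nAX; split => //; apply: incr_to_le_bound (cb _ _ LV LX incV) _ => n.
exact: ale_trans (mon _ _ (LV n) (LZn n) (VZn n)) (piZnY n).
Qed.

End ContinuityToLowerSemicontinuity.

Unset Implicit Arguments. Set Strict Implicit.

Theorem proposition13 (d : measure_display) (Omega : measurableType d)
  (R : realType) (P : probability Omega R)
  (G : set (set Omega)) (LF LG Lstar : set (Omega -> R)) (pi : (Omega -> R) -> (Omega -> R)) :
  (* G is a sub-sigma-algebra of F *)
  sigma_algebra setT G -> G `<=` measurable ->
  (* standing assumptions on L_F, L_G *)
  (forall X, LF X -> measurable_fun setT X) -> vlattice_ind measurable LF ->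
  (forall X, LG X -> Gmeas G X) -> vlattice_ind G LG ->
  (* standing assumptions on the dual L_F^* (represented by densities Z) *)
  (forall Z, Lstar Z -> measurable_fun setT Z /\ P.-integrable setT (EFin \o Z)) ->
  (forall Z X, Lstar Z -> LF X -> P.-integrable setT (EFin \o (fun w => Z w * X w))) ->
  vlattice_ind measurable Lstar ->
  (forall phi : (Omega -> R) -> R, oc_functional P LF phi <->
     exists2 Z, Lstar Z & forall X, LF X -> phi X = pair_E P Z X) ->
  (* hypotheses of the proposition *)
  C_property P LF Lstar -> ocomplete P LF ->
  (forall X, LF X -> LG (pi X)) ->
  (* (MON) *)
  (forall X Y, LF X -> LF Y -> ale P X Y -> ale P (pi X) (pi Y)) ->
  (* (QCO) *)
  (forall X Y (Lam : Omega -> R), LF X -> LF Y -> Gmeas G Lam ->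
     ale P (fun _ => 0) Lam -> ale P Lam (fun _ => 1) ->
     LF (fun w => Lam w * X w + (1 - Lam w) * Y w) ->
     ale P (pi (fun w => Lam w * X w + (1 - Lam w) * Y w))
           (fun w => Num.max (pi X w) (pi Y w))) ->
  (w_lsc P LF Lstar LG pi <-> cont_below P LF pi).
Proof.
move=> sG _ _ vLF GmLG vLG _ _ _ dual Cp ocp piLG mon qco.
have dualZ Z : Lstar Z -> oc_functional P LF (pair_E P Z) by move=> LZ; apply/dual; exists Z.
split; first exact: (w_lsc_cont_below (pi := pi) vLF dualZ sG GmLG vLG piLG mon).
exact: (cont_below_w_lsc (LG := LG) vLF ocp sG qco Cp mon).
Qed.
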